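(* Let $\delta$ be a positive integer, let $G$ be a graph on $n$ vertices with minimum degree at least $\delta$, and let $x>0$ be fixed. Define $$C_x=\frac{\ln(1+x)}{\ln(1+x)-\frac{x}{1+x}},\qquad D_x=\frac{2\ln\left(\frac{x}{1+x}\right)}{\ln(1+x)}.$$ If $$n\ge (C_x-1)\delta^2+((1-D_x)C_x+1+D_x)\delta-D_x,$$ then either $G=K_{\delta,n-\delta}$ or $P(G,x)<P(K_{\delta,n-\delta},x)$.
   Context: Graphs are simple, loopless and finite. For a graph $G$, $i_t(G)$ is the number of independent sets of size $t$ in $G$ (with $i_0(G)=1$), and the independent set polynomial is $P(G,x)=\sum_{t\ge 0} i_t(G)x^t$. $K_{a,b}$ is the complete bipartite graph with $a$ vertices in one part and $b$ in the other. *)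

From HB Require Import structures.
From mathcomp Require Import all_boot all_order all_algebra all_fingroup.
From mathcomp Require Import all_classical all_reals all_analysis.
Set Implicit Arguments. Unset Strict Implicit. Unset Printing Implicit Defensive.
Import Order.TTheory GRing.Theory Num.Theory.
Local Open Scope ring_scope.

(* A simple graph on vertex set 'I_n is a symmetric irreflexive relation
   e : rel 'I_n (symmetry/irreflexivity are hypotheses of the theorem). *)

Definition is_indep (n : nat) (e : rel 'I_n) (S : {set 'I_n}) : bool :=
  [forall u in S, forall v in S, ~~ e u v].

Definition indep_count (n : nat) (e : rel 'I_n) (t : nat) : nat :=
  #|[set S : {set 'I_n} | is_indep e S && (#|S| == t)%N]|.

(* P(G,x) = sum_{t>=0} i_t(G) x^t  (i_t = 0 for t > n) *)
Definition indep_poly (R : numDomainType) (n : nat) (e : rel 'I_n) (x : R) : R :=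
  \sum_(t < n.+1) (indep_count e t)%:R * x ^+ t.

Definition deg (n : nat) (e : rel 'I_n) (v : 'I_n) : nat := #|[set u | e v u]|.

Definition Kbip (n d : nat) : rel 'I_n := fun i j => (i < d)%N != (j < d)%N.

Definition graph_iso (n : nat) (e1 e2 : rel 'I_n) : Prop :=
  exists f : {perm 'I_n}, forall i j, e1 i j = e2 (f i) (f j).

Definition Cx (R : realType) (x : R) : R :=
  ln (1 + x) / (ln (1 + x) - x / (1 + x)).

Definition Dx (R : realType) (x : R) : R :=
  2 * ln (x / (1 + x)) / ln (1 + x).
Arguments Kbip n d : clear implicits.

From HB Require Import structures.
From mathcomp Require Import all_boot all_order all_algebra all_fingroup.
From mathcomp Require Import all_classical all_reals all_analysis.
From mathcomp Require Import ring lra zify.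
Import Order.TTheory GRing.Theory Num.Theory.
Set Implicit Arguments. Unset Strict Implicit. Unset Printing Implicit Defensive.

(* Let m = n - delta - 1, the largest possible number of non-neighbours of a
   vertex.  If for some vertex v these m vertices are independent, then
   deg v = delta and every vertex outside N(v) is adjacent to all of N(v): G is
   K_{delta,n-delta} plus possibly some edges inside N(v), so either G is
   K_{delta,n-delta} or it has at most as many independent t-sets for every t
   and strictly fewer of size 2.  Otherwise every non-neighbourhood spans an
   edge uw, so it holds at most 2 C(m-1,t) - C(m-2,t) independent t-sets (they
   avoid u or w), and double counting gives
   (t+1) i_{t+1}(G) <= n (2 C(m-1,t) - C(m-2,t)).  Summing,
   P(G,x) <= 1 + n (2 ((1+x)^m - 1)/m - ((1+x)^(m-1) - 1)/(m-1)), whereas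
   P(K_{delta,n-delta},x) >= (1+x)^(n-delta) + (1+x)^delta - 1.  The condition
   on n makes the first bound the smaller one; C_x and D_x enter only through
   (C_x - 1) x >= 1 and -D_x x (1+x) >= 2. *)

Section IndependentSets.
Variable n : nat.
Implicit Types (e : rel 'I_n) (u v w : 'I_n) (S T W : {set 'I_n}).

Definition indep_sets e t := [set S : {set 'I_n} | is_indep e S && (#|S| == t)].

Definition indep_subsets e W t :=
  [set T : {set 'I_n} | [&& T \subset W, is_indep e T & #|T| == t]].

Definition nbrs e v := [set u | e v u].

Definition nonnbrs e v := [set u | (u != v) && ~~ e v u].

Lemma is_indepP e S :
  reflect (forall u v, u \in S -> v \in S -> ~~ e u v) (is_indep e S).
Proof.
apply: (iffP forall_inP) => [H u v uS vS | H u uS].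
  by have /forall_inP := H u uS; apply.
by apply/forall_inP => v vS; apply: H.
Qed.

Lemma indep_subset e S T : T \subset S -> is_indep e S -> is_indep e T.
Proof.
move=> /fintype.subsetP TS /is_indepP iS; apply/is_indepP => u v uT vT.
by apply: iS; apply: TS.
Qed.

Lemma indep_subrel e e' S :
  (forall u v, e' u v -> e u v) -> is_indep e S -> is_indep e' S.
Proof.
move=> e'e /is_indepP iS; apply/is_indepP => u v uS vS.
by apply: contraNN (iS u v uS vS); apply: e'e.
Qed.

Lemma indep_count0 e : indep_count e 0 = 1%N.
Proof.
rewrite /indep_count (_ : [set S | _] = [set finset.set0]) ?cards1 //.
apply/setP => S; rewrite !inE cards_eq0.
case: eqP => [->|]; last by rewrite andbF.
by rewrite andbT; apply/is_indepP => u v; rewrite inE.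
Qed.

Lemma indep_count_subrel e e' t :
  (forall u v, e' u v -> e u v) -> (indep_count e t <= indep_count e' t)%N.
Proof.
move=> e'e; apply: subset_leq_card; apply/fintype.subsetP => S; rewrite !inE.
by case/andP => iS ->; rewrite (indep_subrel e'e iS).
Qed.

Lemma indep_count_perm e (f : {perm 'I_n}) t :
  indep_count (fun i j => e (f i) (f j)) t = indep_count e t.
Proof.
suff le_perm e' (g : {perm 'I_n}) :
    (indep_count (fun i j => e' (g i) (g j)) t <= indep_count e' t)%N.
  apply/eqP; rewrite eqn_leq le_perm /=.
  have := le_perm (fun i j => e (f i) (f j)) (f^-1)%g.
  apply: leq_trans; apply: indep_count_subrel => i j /=.
  by rewrite !permKV.
have g_inj : injective (fun S => g @: S) by apply/imset_inj/perm_inj.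
rewrite /indep_count -(card_imset _ g_inj); apply: subset_leq_card.
apply/fintype.subsetP => S' /imsetP [S]; rewrite !inE => /andP[iS cS] ->.
rewrite card_imset ?cS ?andbT; last exact: perm_inj.
apply/is_indepP => a' b' /imsetP[a aS ->] /imsetP[b bS ->].
by move/is_indepP: iS; apply.
Qed.

Lemma indep_count_double e t :
  (t * indep_count e t = \sum_v #|[set S in indep_sets e t | v \in S]|)%N.
Proof.
rewrite /indep_count -/(indep_sets e t).
transitivity (\sum_(S in indep_sets e t) #|S|)%N.
  rewrite (eq_bigr (fun _ => t)); first by rewrite sum_nat_const mulnC.
  by move=> S; rewrite inE => /andP[_ /eqP].
transitivity (\sum_(S in indep_sets e t) \sum_v (v \in S : nat))%N.
  by apply: eq_bigr => S _; rewrite -sum1_card big_mkcond.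
rewrite exchange_big /=; apply: eq_bigr => v _.
rewrite -sum1_card [LHS]big_mkcond [RHS]big_mkcond /=; apply: eq_bigr => S _.
by rewrite !inE; case: (_ && _); case: (v \in S).
Qed.

Lemma card_nonnbrs e v : irreflexive e -> (#|nonnbrs e v| + (deg e v).+1)%N = n.
Proof.
move=> irr; have vN : v \notin nbrs e v by rewrite inE irr.
have -> : nonnbrs e v = ~: (v |: nbrs e v).
  by apply/setP => u; rewrite !inE negb_or.
have := cardsC (v |: nbrs e v); rewrite card_ord cardsU1 vN.
by rewrite /deg -/(nbrs e v); lia.
Qed.

Lemma card_indep_sets_containing e v t :
  (#|[set S in indep_sets e t.+1 | v \in S]| <=
   #|indep_subsets e (nonnbrs e v) t|)%N.
Proof.
set D := [set S in _ | _].
have inj : {in D &, injective (fun S => S :\ v)}.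
  move=> S1 S2; rewrite !inE => /andP[_ v1] /andP[_ v2] eq12.
  by rewrite -(finset.setD1K v1) eq12 finset.setD1K.
rewrite -(card_in_imset inj); apply: subset_leq_card.
apply/fintype.subsetP => T /imsetP [S]; rewrite !inE.
move=> /andP[/andP[iS /eqP cS] vS] ->.
rewrite (indep_subset (subsetDl _ _) iS) /=; apply/andP; split.
  apply/fintype.subsetP => u; rewrite !inE => /andP[uv uS]; rewrite uv /=.
  by move/is_indepP: iS; apply.
by have := cardsD1 v S; rewrite vS cS => -[->].
Qed.

(* Every independent subset avoids u or w; count by inclusion-exclusion. *)
Lemma card_indep_subsets_edge e W u w s :
  u \in W -> w \in W -> u != w -> e u w ->
  (#|indep_subsets e W s| <= 2 * 'C(#|W|.-1, s) - 'C(#|W|.-2, s))%N.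
Proof.
move=> uW wW uw euw.
set A := [set T : {set 'I_n} | T \subset W :\ u & #|T| == s].
set B := [set T : {set 'I_n} | T \subset W :\ w & #|T| == s].
have sub : indep_subsets e W s \subset A :|: B.
  apply/fintype.subsetP => T; rewrite !inE !subsetD1 => /and3P[-> iT ->].
  rewrite !andbT; case uT: (u \in T) => //=; apply/negP => wT.
  by move/is_indepP: iT => /(_ u w uT wT); rewrite euw.
have cWu : #|W :\ u| = #|W|.-1 by rewrite (cardsD1 u W) uW.
have cWw : #|W :\ w| = #|W|.-1 by rewrite (cardsD1 w W) wW.
have cWuw : #|W :\ u :\ w| = #|W|.-2.
  by have := cardsD1 w (W :\ u); rewrite !inE eq_sym uw wW cWu /= => ->.
have cAB : #|A :&: B| = 'C(#|W|.-2, s).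
  rewrite -cWuw -cards_draws; apply: eq_card => T; rewrite !inE !subsetD1.
  by case: (T \subset W); case: (u \in T); case: (w \in T); case: (#|T| == s).
have := subset_leq_card sub; rewrite cardsU cAB /A /B !cards_draws cWu cWw.
lia.
Qed.

Lemma card_indep_subsets_le e W m s : irreflexive e ->
  (#|W| <= m)%N -> ~~ ((#|W| == m) && is_indep e W) ->
  (#|indep_subsets e W s| <= 2 * 'C(m.-1, s) - 'C(m.-2, s))%N.
Proof.
move=> irr Wm notW.
have hb : ('C(m.-2, s) <= 'C(m.-1, s))%N by apply: leq_bin2l; lia.
have [ltWm|geWm] := ltnP #|W| m.
  have : (#|indep_subsets e W s| <= #|[set T : {set 'I_n} | T \subset W & #|T| == s]|)%N.
    apply: subset_leq_card; apply/fintype.subsetP => T; rewrite !inE.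
    by case/and3P => -> _ ->.
  have : ('C(#|W|, s) <= 'C(m.-1, s))%N by apply: leq_bin2l; lia.
  rewrite cards_draws; lia.
have eW : #|W| = m by apply/eqP; rewrite eqn_leq Wm geWm.
rewrite eW eqxx /= in notW; rewrite -eW.
case/forall_inPn: notW => u uW /forall_inPn [w wW /negPn euw].
have uw : u != w by apply: contraTneq euw => ->; rewrite irr.
exact: (card_indep_subsets_edge s uW wW uw euw).
Qed.

Lemma card_set_ltn d : (d <= n)%N -> #|[set i : 'I_n | (i < d)%N]| = d.
Proof.
move=> dn; have widen_inj : injective (widen_ord dn).
  by move=> i j /(congr1 val) /= /val_inj.
rewrite -[RHS]card_ord -(card_imset _ widen_inj).
apply: eq_card => i; rewrite inE; apply/idP/imsetP => [lt_id | [j _ ->]].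
  by exists (Ordinal lt_id) => //; apply: val_inj.
exact: ltn_ord j.
Qed.

Lemma indep_count_Kbip_ge d t : (d <= n)%N -> (0 < t)%N ->
  ('C(n - d, t) + 'C(d, t) <= indep_count (Kbip n d) t)%N.
Proof.
move=> dn t_gt0.
set A := [set i : 'I_n | (i < d)%N].
have cA : #|A| = d by apply: card_set_ltn.
have cAc : #|~: A| = (n - d)%N by have := cardsC A; rewrite card_ord cA; lia.
set FA := [set S : {set 'I_n} | S \subset A & #|S| == t].
set FB := [set S : {set 'I_n} | S \subset ~: A & #|S| == t].
have FAB0 : FA :&: FB = finset.set0.
  apply/eqP; rewrite -finset.subset0; apply/fintype.subsetP => S; rewrite !inE.
  case/andP => /andP[SA /eqP cS] /andP[SAc _].
  have : S \subset A :&: ~: A by rewrite finset.subsetI SA.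
  by rewrite finset.setICr finset.subset0 => /eqP S0; rewrite -cS S0 cards0 in t_gt0.
have sub : FA :|: FB \subset indep_sets (Kbip n d) t.
  apply/fintype.subsetP => S; rewrite !inE => /orP[] /andP[/fintype.subsetP sS ->];
  rewrite andbT; apply/is_indepP => a b aS bS; move: (sS a aS) (sS b bS);
  rewrite /Kbip !inE; first by move=> -> ->.
  by move=> /negbTE -> /negbTE ->.
have := subset_leq_card sub; rewrite cardsU FAB0 cards0 subn0 !cards_draws cA cAc.
by rewrite addnC.
Qed.

Lemma perm_prefix (A : {set 'I_n}) :
  exists f : {perm 'I_n}, forall i, (f i < #|A|)%N = (i \in A).
Proof.
set r := enum A ++ enum (~: A).
have sr : size r = n by rewrite size_cat -!cardE; have := cardsC A; rewrite card_ord.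
have memr i : i \in r by rewrite mem_cat !mem_enum inE; case: (i \in A).
have ltr i : (index i r < n)%N by have := index_mem i r; rewrite memr sr.
have inj : injective (fun i => Ordinal (ltr i)).
  move=> i j /(congr1 val) /= eij.
  by rewrite -(nth_index i (memr i)) eij (nth_index i (memr j)).
exists (perm inj) => i; rewrite permE /= /r index_cat mem_enum.
case: (boolP (i \in A)) => iA; first by rewrite cardE index_mem mem_enum.
by rewrite -cardE ltnNge leq_addr.
Qed.

Section MinDegree.
Variables (e : rel 'I_n) (d : nat).
Hypotheses (e_sym : symmetric e) (e_irr : irreflexive e).
Hypothesis mindeg : forall v, (d <= deg e v)%N.

Lemma nbrs_complete v :
  #|nonnbrs e v| = (n - d.+1)%N -> is_indep e (nonnbrs e v) ->
  #|nbrs e v| = d /\ forall u w, u \notin nbrs e v -> e u w = (w \in nbrs e v).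
Proof.
move=> cW iW.
have cR : #|nbrs e v| = d.
  by have := card_nonnbrs v e_irr; have := mindeg v; rewrite /deg -/(nbrs e v); lia.
set R := nbrs e v in cR *.
have outR u : u \notin R -> (u == v) || (u \in nonnbrs e v) by rewrite !inE; case: eqP.
have indep_out u w : u \notin R -> w \notin R -> ~~ e u w.
  move=> uR wR; case/orP: (outR u uR) => [/eqP ->|uW]; first by move: wR; rewrite inE.
  case/orP: (outR w wR) => [/eqP ->|wW]; first by rewrite e_sym; move: uR; rewrite inE.
  by move/is_indepP: iW; apply.
split=> // u w uR.
have sub : nbrs e u \subset R.
  apply/fintype.subsetP => z; rewrite inE => euz.
  by apply: contraTT euz; apply: indep_out.
have /eqP <- : nbrs e u == R by rewrite eqEcard sub cR; apply: mindeg.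
by rewrite inE.
Qed.

Lemma iso_Kbip_or_indep_count_lt v :
  #|nonnbrs e v| = (n - d.+1)%N -> is_indep e (nonnbrs e v) ->
  graph_iso e (Kbip n d) \/
  (forall t, (indep_count e t <= indep_count (Kbip n d) t)%N) /\
  (indep_count e 2 < indep_count (Kbip n d) 2)%N.
Proof.
move=> cW iW; have [cR join] := nbrs_complete cW iW; set R := nbrs e v in cR join.
have [f fR] := perm_prefix R; rewrite cR in fR.
have Kf_in i j : i \in R -> j \in R -> Kbip n d (f i) (f j) = false.
  by move=> iR jR; rewrite /Kbip !fR iR jR.
have Kf_out i j : ~~ ((i \in R) && (j \in R)) -> e i j = Kbip n d (f i) (f j).
  rewrite /Kbip !fR; case iR: (i \in R); case jR: (j \in R) => //= _.
  - by rewrite e_sym join ?iR ?jR.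
  - by rewrite join ?iR ?jR.
  - by rewrite join ?iR ?jR.
have [R_indep | /forall_inPn[u uR /forall_inPn[w wR /negPn euw]]] :=
  boolP (is_indep e R).
  left; exists f => i j.
  have [/andP[iR jR]|] := boolP ((i \in R) && (j \in R)); last exact: Kf_out.
  by rewrite Kf_in //; apply/negbTE; move/is_indepP: R_indep; apply.
right.
have K_sub i j : Kbip n d (f i) (f j) -> e i j.
  have [/andP[iR jR]|/Kf_out ->//] := boolP ((i \in R) && (j \in R)).
  by rewrite Kf_in.
have uw : u != w by apply: contraTneq euw => ->; rewrite e_irr.
split=> [t|]; rewrite -(indep_count_perm (Kbip n d) f); first exact: indep_count_subrel.
apply: proper_card; apply/fintype.properP; split.
  apply/fintype.subsetP => S; rewrite !inE => /andP[iS ->].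
  by rewrite (indep_subrel K_sub iS).
exists [set u; w].
  rewrite !inE cards2 uw andbT; apply/is_indepP => a b.
  by rewrite !inE => /orP[] /eqP -> /orP[] /eqP ->; rewrite Kf_in.
rewrite !inE negb_and; apply/orP; left; apply/is_indepP => /(_ u w).
by rewrite !inE !eqxx orbT euw => /(_ isT isT).
Qed.

Lemma indep_count_le_nonnbrs t :
  (forall v, ~~ ((#|nonnbrs e v| == (n - d.+1)%N) && is_indep e (nonnbrs e v))) ->
  (t.+1 * indep_count e t.+1 <=
     n * (2 * 'C((n - d.+1).-1, t) - 'C((n - d.+1).-2, t)))%N.
Proof.
move=> notW; rewrite indep_count_double.
set b := (2 * 'C((n - d.+1).-1, t) - 'C((n - d.+1).-2, t))%N.
apply: leq_trans (_ : \sum_(v : 'I_n) b <= _)%N; last by rewrite sum_nat_const card_ord.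
apply: leq_sum => v _; apply: leq_trans (card_indep_sets_containing e v t) _.
apply: card_indep_subsets_le => //.
(* Restores the canonical instance of #|_|, which lia would see as a new atom. *)
change (#|nonnbrs e v| <= n - d.+1)%N.
by have := card_nonnbrs v e_irr; have := mindeg v; lia.
Qed.

End MinDegree.
End IndependentSets.

Local Open Scope ring_scope.

Section RealInequalities.
Variable R : realType.
Implicit Types x : R.

Lemma lt_ln1Dx x : -1 < x -> x != 0 -> ln (1 + x) < x.
Proof.
move=> x_gtN1 x_neq0; rewrite -ltr_expR lnK ?expR_gt1Dx //.
by rewrite posrE addrC -ltrBlDr sub0r.
Qed.

(* Both bounds follow from q < ln (1 + x) <= x and ln q <= q - 1,
   where q = x / (1 + x). *)
Lemma Cx_Dx_bounds x : 0 < x -> 1 <= (Cx x - 1) * x /\ 2 <= - Dx x * x * (1 + x).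
Proof.
move=> x_gt0; set L := ln (1 + x); set q := x / (1 + x).
have L_gt0 : 0 < L by apply: ln_gt0; lra.
have L_le : L <= x by apply: le_ln1Dx; lra.
have q_gt0 : 0 < q by apply: divr_gt0; lra.
have q_lt1 : q < 1 by rewrite /q ltr_pdivrMr; lra.
have q1x : q * (1 + x) = x by rewrite /q mulfVK //; apply/eqP; lra.
have q_lt_L : q < L.
  have := @lt_ln1Dx (- q) (ltac:(lra)) (ltac:(by rewrite oppr_eq0 gt_eqF)).
  rewrite (_ : 1 + - q = (1 + x)^-1) ?lnV ?posrE -/L; try lra.
  by rewrite /q; field; apply/eqP; lra.
have lnq : ln q <= q - 1.
  by have := @le_ln1Dx R (q - 1) (ltac:(lra)); rewrite addrC subrK.
split.
  rewrite /Cx -/L -/q (_ : L / (L - q) - 1 = q / (L - q)); last by field; lra.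
  by rewrite mulrAC ler_pdivlMr ?mul1r; [nra | lra].
rewrite /Dx -/L -/q.
rewrite (_ : - (2 * ln q / L) * x * (1 + x) = 2 * (- ln q) * x * (1 + x) / L);
  last by field; lra.
rewrite ler_pdivlMr //.
have : 0 <= (- ln q - (1 - q)) * (x * (1 + x)) by apply: mulr_ge0; nra.
nra.
Qed.

Lemma bernoulli_ineq x k : 0 <= x -> 1 + k%:R * x <= (1 + x) ^+ k.
Proof.
move=> x_ge0; elim: k => [|k IH]; first by rewrite mul0r addr0 expr0.
have : 0 <= k%:R * x by apply: mulr_ge0.
rewrite exprS -natr1; nra.
Qed.

(* Consequences of the size condition on n, with c = C_x - 1 and E = - D_x, and
   M = n - d - 1 the number of non-neighbours of a vertex of degree d. *)
Lemma threshold_bounds x (c E M : R) (d : nat) :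
  0 < x -> 1 <= c * x -> 2 <= E * x * (1 + x) -> (0 < d)%N ->
  c * d%:R ^+ 2 + (c + 2) * d%:R + E * (c * d%:R + 1) <= M + d%:R + 1 ->
  [/\ d%:R - 1 < M, ((2 <= d)%N -> 2 * x * (d%:R + 1) + d%:R <= x ^+ 2 * M),
     (d = 1%N -> 2 * x + 2 <= x ^+ 2 * M),
     (M = 2 -> 1 < d%:R * x) & (M = 3 -> 0 < 6 * d%:R * x + d%:R - 2)].
Proof.
move=> x_gt0 hc hE d_gt0 hT; set dd := d%:R in hT *.
have dd_ge1 : 1 <= dd by rewrite /dd (ler_nat R 1 d).
have c_gt0 : 0 < c by nra.
have E_gt0 : 0 < E.
  have : 0 < x * (1 + x) by apply: mulr_gt0; lra.
  nra.
have hcd : 0 <= c * dd ^+ 2 + c * dd.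
  have cd_ge0 : 0 <= c * dd by apply: mulr_ge0; lra.
  have : 0 <= c * dd * dd by apply: mulr_ge0; lra.
  nra.
have hEp : 0 < E * (c * dd + 1) by apply: mulr_gt0 => //; nra.
have hA : dd * (dd + 1) <= c * x * (dd * (dd + 1)).
  have : 0 <= (c * x - 1) * (dd * (dd + 1)) by apply: mulr_ge0; nra.
  lra.
split.
- nra.
- move=> d_ge2; have dd_ge2 : 2 <= dd by rewrite /dd (ler_nat R 2 d).
  have h1 : x * dd ^+ 2 <= x ^+ 2 * c * dd ^+ 2.
    have : 0 <= (c * x - 1) * (x * dd ^+ 2) by apply: mulr_ge0; nra.
    nra.
  have h2 : x * dd <= x ^+ 2 * c * dd.
    have : 0 <= (c * x - 1) * (x * dd) by apply: mulr_ge0; nra.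
    nra.
  have h3 : x * E * (dd + x) <= x ^+ 2 * E * (c * dd + 1).
    have : 0 <= (c * x - 1) * (x * E * dd) by apply: mulr_ge0; nra.
    nra.
  have h4 : 2 * (dd + x) <= x * E * (dd + x) * (1 + x).
    have : 0 <= (E * x * (1 + x) - 2) * (dd + x) by apply: mulr_ge0; lra.
    nra.
  have hM : x * dd ^+ 2 + x * dd + x ^+ 2 * (dd - 1) + x * E * (dd + x) <= x ^+ 2 * M.
    have : x ^+ 2 * (c * dd ^+ 2 + (c + 2) * dd + E * (c * dd + 1))
           <= x ^+ 2 * (M + dd + 1) by apply: ler_wpM2l => //; apply: exprn_ge0; lra.
    nra.
  have hP : (1 + x) * (2 * x * (dd + 1) + dd) <=
            (1 + x) * (x * dd ^+ 2 + x * dd + x ^+ 2 * (dd - 1)) + 2 * (dd + x).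
    have q1 : 0 <= x * (dd - 2) * ((dd + 1) * (1 + x) - 1).
      by apply: mulr_ge0; [apply: mulr_ge0; lra | nra].
    have q2 : 0 <= x ^+ 2 * (dd - 1) * (1 + x).
      by apply: mulr_ge0; [apply: mulr_ge0; [apply: exprn_ge0|]|]; lra.
    nra.
  have : (1 + x) * (2 * x * (dd + 1) + dd) <= (1 + x) * (x ^+ 2 * M) by nra.
  by rewrite ler_pM2l //; lra.
- move=> d1; rewrite /dd d1 /= in hT *.
  have h3 : x * E * (1 + x) <= x ^+ 2 * E * (c + 1).
    have : 0 <= (c * x - 1) * (x * E) by apply: mulr_ge0; nra.
    nra.
  have : x ^+ 2 * (c * 1 ^+ 2 + (c + 2) * 1 + E * (c * 1 + 1)) <= x ^+ 2 * (M + 1 + 1).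
    by apply: ler_wpM2l => //; apply: exprn_ge0; lra.
  nra.
- move=> M2; rewrite M2 in hT.
  have : dd * (dd + 1) < (3 - dd) * x by nra.
  nra.
- move=> M3; rewrite M3 in hT.
  have : dd * (dd + 1) < (4 - dd) * x by nra.
  nra.
Qed.

Lemma gap_coef_ge0 x (M : R) (d : nat) : 0 < x -> 2 <= M -> (0 < d)%N ->
  ((2 <= d)%N -> 2 * x * (d%:R + 1) + d%:R <= x ^+ 2 * M) ->
  (d = 1%N -> 2 * x + 2 <= x ^+ 2 * M) ->
  0 <= M * (M - 1) * (1 + x) ^+ 2 - (M + d%:R + 1) * (2 * (1 + x) * (M - 1) - M).
Proof.
move=> x_gt0 M_ge2 d_gt0 hd2 hd1.
have [d_ge2|d_le1] := ltnP 1 d.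
  have := hd2 d_ge2; set dd := d%:R => H.
  have dd_ge2 : 2 <= dd by rewrite /dd (ler_nat R 2 d).
  have : 0 <= (M - 1) * (x ^+ 2 * M - 2 * x * (dd + 1) - dd) by apply: mulr_ge0; lra.
  have -> : M * (M - 1) * (1 + x) ^+ 2 - (M + dd + 1) * (2 * (1 + x) * (M - 1) - M)
     = (M - 1) * (x ^+ 2 * M - 2 * x * (dd + 1) - dd) + dd + 2 by ring.
  lra.
have d1 : d = 1%N by lia.
have H := hd1 d1; rewrite d1.
have -> : M * (M - 1) * (1 + x) ^+ 2 - (M + 1%:R + 1) * (2 * (1 + x) * (M - 1) - M)
    = x ^+ 2 * M ^+ 2 - (x ^+ 2 + 4 * x + 1) * M + 4 * x + 4 by rewrite /=; ring.
have sq_ge0 (y : R) : 0 <= y ^+ 2 by apply: sqr_ge0.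
have [x2_le3|x2_gt3] := lerP (x ^+ 2) 3.
  set s := x ^+ 2 * M - 2 * x - 2.
  have s_ge0 : 0 <= s by rewrite /s; lra.
  have e : x ^+ 2 * (x ^+ 2 * M ^+ 2 - (x ^+ 2 + 4 * x + 1) * M + 4 * x + 4)
     = s ^+ 2 + s * (3 - x ^+ 2) + 2 * (x - 1) ^+ 2 * (x + 1) by rewrite /s; ring.
  have p1 : 0 <= s * (3 - x ^+ 2) by apply: mulr_ge0; lra.
  have p2 : 0 <= 2 * (x - 1) ^+ 2 * (x + 1).
    by apply: mulr_ge0; [apply: mulr_ge0; [lra | apply: sq_ge0] | lra].
  have x2_gt0 : 0 < x ^+ 2 by apply: exprn_gt0.
  by rewrite -(pmulr_rge0 _ x2_gt0) e; have := sq_ge0 s; lra.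
have q_ge0 : 0 <= 3 * x ^+ 2 - 4 * x - 1.
  have : 8 < 5 * x by nra.
  nra.
have -> : x ^+ 2 * M ^+ 2 - (x ^+ 2 + 4 * x + 1) * M + 4 * x + 4
   = 2 * (x - 1) ^+ 2 + (M - 2) * (3 * x ^+ 2 - 4 * x - 1) + x ^+ 2 * (M - 2) ^+ 2 by ring.
have : 0 <= (M - 2) * (3 * x ^+ 2 - 4 * x - 1) by apply: mulr_ge0; lra.
have : 0 <= x ^+ 2 * (M - 2) ^+ 2 by apply: mulr_ge0.
have := sq_ge0 (x - 1); lra.
Qed.

Lemma gap_const_gt0 x (B : R) (m d : nat) : 0 < x -> (2 <= m)%N -> (0 < d)%N ->
  1 + d%:R * x <= B ->
  (m = 2%N -> 1 < d%:R * x) -> (m = 3%N -> 0 < 6 * d%:R * x + d%:R - 2) ->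
  0 < m%:R * (m%:R - 1) * (B - 2) + (m%:R + d%:R + 1) * (m%:R - 2).
Proof.
move=> x_gt0 m_ge2 d_gt0 hB hm2 hm3.
have dd_ge1 : 1 <= d%:R :> R by rewrite (ler_nat R 1 d).
have dx_gt0 : 0 < d%:R * x by apply: mulr_gt0; lra.
have [m_lt4|m_ge4] := ltnP m 4.
  have [m2|m3] : m = 2%N \/ m = 3%N by lia.
    by have := hm2 m2; rewrite m2 /=; nra.
  by have := hm3 m3; rewrite m3 /=; nra.
have mm_ge4 : 4 <= m%:R :> R by rewrite (ler_nat R 4 m).
have p1 : 0 < m%:R * (m%:R - 1) * (d%:R * x) :> R by apply: mulr_gt0 => //; nra.
have p2 : 0 <= m%:R * (m%:R - 1) * (B - 1 - d%:R * x) :> R.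
  by apply: mulr_ge0; [nra | lra].
have p3 : 0 <= (d%:R - 1) * (m%:R - 2) :> R by apply: mulr_ge0; lra.
nra.
Qed.

(* The difference of the two sides is (A K + Q) / (M (M - 1)), where K and Q
   are the expressions of the last two hypotheses. *)
Lemma gap_split x (A B S1 S2 M dd : R) : 0 < x -> 2 <= M -> 1 <= A ->
  M * S1 = (1 + x) * A - 1 -> (M - 1) * S2 = A - 1 ->
  0 <= M * (M - 1) * (1 + x) ^+ 2 - (M + dd + 1) * (2 * (1 + x) * (M - 1) - M) ->
  0 < M * (M - 1) * (B - 2) + (M + dd + 1) * (M - 2) ->
  1 + (M + dd + 1) * (2 * S1 - S2) < (1 + x) ^+ 2 * A + B - 1.
Proof.
move=> x_gt0 M_ge2 A_ge1 hS1 hS2 hK hQ.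
have M_neq0 : M != 0 by apply/eqP; lra.
have M1_neq0 : M - 1 != 0 by apply/eqP; lra.
have -> : S1 = ((1 + x) * A - 1) / M by rewrite -hS1 [M * S1]mulrC mulfK.
have -> : S2 = (A - 1) / (M - 1) by rewrite -hS2 [(M - 1) * S2]mulrC mulfK.
set K := M * (M - 1) * (1 + x) ^+ 2 - _ in hK.
set Q := M * (M - 1) * (B - 2) + _ in hQ.
rewrite -subr_gt0.
have -> : (1 + x) ^+ 2 * A + B - 1
          - (1 + (M + dd + 1) * (2 * (((1 + x) * A - 1) / M) - (A - 1) / (M - 1)))
        = (A * K + Q) / (M * (M - 1)).
  by rewrite /K /Q; field; apply/andP.
apply: divr_gt0; last by apply: mulr_gt0; lra.
have : 0 <= A * K by apply: mulr_ge0; lra.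
lra.
Qed.
End RealInequalities.

Section IndepPoly.
Variable R : realType.
Implicit Types x : R.

Lemma sum_binom_expr x N k : (k <= N)%N ->
  \sum_(t < N.+1) 'C(k, t)%:R * x ^+ t = (1 + x) ^+ k.
Proof.
move=> kN; rewrite addrC exprD1n.
rewrite (big_ord_widen N.+1 (fun i => x ^+ i *+ 'C(k, i))) //.
rewrite big_mkcond [RHS]big_mkcond /=.
apply: eq_bigr => i _; case: ltnP => ik; first by rewrite mulr_natl.
by rewrite bin_small // mul0r.
Qed.

(* The antiderivative of (1 + y)^(k-1) at y = x, truncated at degree N. *)
Definition int_binom x N k := \sum_(t < N) 'C(k.-1, t)%:R * x ^+ t.+1 / t.+1%:R.

Lemma int_binomE x N k : (k <= N)%N -> k%:R * int_binom x N k = (1 + x) ^+ k - 1.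
Proof.
move=> kN; rewrite -(sum_binom_expr x kN) big_ord_recl /= bin0 expr0 mulr1 addrC addKr.
rewrite mulr_sumr; apply: eq_bigr => t _; rewrite /bump /= add1n.
rewrite mulrA mulrA -natrM mul_bin_diag natrM -mulrA mulrAC mulrC.
by congr (_ * _); rewrite mulrC divfK // pnatr_eq0.
Qed.

Lemma indep_poly_lt n (e e' : rel 'I_n) x : 0 < x -> (2 <= n)%N ->
  (forall t, (indep_count e t <= indep_count e' t)%N) ->
  (indep_count e 2 < indep_count e' 2)%N -> indep_poly e x < indep_poly e' x.
Proof.
move=> x_gt0 n_ge2 le_count lt_count; rewrite /indep_poly.
rewrite (bigD1 (inord 2)) // [X in _ < X](bigD1 (inord 2)) //= inordK ?ltnS //.
apply: ltr_leD; first by rewrite ltr_pM2r ?ltr_nat // exprn_gt0.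
by apply: ler_sum => t _; apply: ler_wpM2r; [apply/exprn_ge0/ltW | rewrite ler_nat].
Qed.

Lemma indep_poly_Kbip_ge x n d : 0 < x -> (d <= n)%N ->
  (1 + x) ^+ (n - d) + (1 + x) ^+ d - 1 <= indep_poly (Kbip n d) x.
Proof.
move=> x_gt0 dn; rewrite /indep_poly big_ord_recl indep_count0 expr0 mulr1.
rewrite -(sum_binom_expr x (leq_subr d n)) -(sum_binom_expr x dn).
rewrite !big_ord_recl !bin0 !expr0 !mulr1.
have -> (a b : R) : 1 + a + (1 + b) - 1 = 1 + (a + b) by ring.
rewrite lerD2l -big_split; apply: ler_sum => t _ /=; rewrite -mulrDl -natrD.
apply: ler_wpM2r; first by apply/exprn_ge0/ltW.
by rewrite ler_nat /bump /=; apply: indep_count_Kbip_ge.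
Qed.

Lemma indep_poly_le_nonnbrs x n (e : rel 'I_n) d : 0 < x -> irreflexive e ->
  (forall v, (d <= deg e v)%N) ->
  (forall v, ~~ ((#|nonnbrs e v| == (n - d.+1)%N) && is_indep e (nonnbrs e v))) ->
  indep_poly e x <=
    1 + n%:R * (2 * int_binom x n (n - d.+1) - int_binom x n (n - d.+1).-1).
Proof.
move=> x_gt0 e_irr mindeg notW; set m := (n - d.+1)%N.
rewrite /indep_poly big_ord_recl indep_count0 expr0 mulr1 lerD2l /int_binom.
rewrite mulrBr mulrA !mulr_sumr -sumrB; apply: ler_sum => t _; rewrite /bump /=.
have count_le := indep_count_le_nonnbrs e_irr mindeg t notW; rewrite -/m in count_le.
have bin_le : ('C(m.-2, t) <= 2 * 'C(m.-1, t))%N.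
  by have := @leq_bin2l m.-2 m.-1 t; lia.
have t1_gt0 : 0 < t.+1%:R :> R by rewrite ltr0n.
rewrite (_ : n%:R * 2 * ('C(m.-1, t)%:R * x ^+ t.+1 / t.+1%:R) -
             n%:R * ('C(m.-2, t)%:R * x ^+ t.+1 / t.+1%:R)
          = n%:R * (2 * 'C(m.-1, t)%:R - 'C(m.-2, t)%:R) / t.+1%:R * x ^+ t.+1);
  last by field; rewrite gt_eqF.
apply: ler_wpM2r; first by apply/exprn_ge0/ltW.
rewrite ler_pdivlMr // mulrC.
by move: count_le; rewrite -(ler_nat R) !natrM natrB // natrM.
Qed.

Lemma threshold_gap x (n d : nat) : 0 < x -> (0 < d)%N ->
  (Cx x - 1) * d%:R ^+ 2 + ((1 - Dx x) * Cx x + 1 + Dx x) * d%:R - Dx x <= n%:R ->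
  (d.*2 < n)%N /\
  1 + n%:R * (2 * int_binom x n (n - d.+1) - int_binom x n (n - d.+1).-1)
    < (1 + x) ^+ (n - d) + (1 + x) ^+ d - 1.
Proof.
move=> x_gt0 d_gt0 hn; have [hC hD] := Cx_Dx_bounds x_gt0.
have hT : (Cx x - 1) * d%:R ^+ 2 + (Cx x - 1 + 2) * d%:R
          + (- Dx x) * ((Cx x - 1) * d%:R + 1) <= (n%:R - d%:R - 1) + d%:R + 1.
  by move: hn; congr (_ <= _); ring.
have [dM hK2 hK1 hQ2 hQ3] := threshold_bounds x_gt0 hC hD d_gt0 hT.
have lt2dn : (d.*2 < n)%N by rewrite -(ltr_nat R) -muln2 natrM; clear -dM; lra.
split=> //; set m := (n - d.+1)%N.
have mR : m%:R = n%:R - d%:R - 1 :> R.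
  by rewrite /m natrB -?nat1r; [ring | lia].
rewrite -mR in dM hK2 hK1 hQ2 hQ3.
have dm : (d <= m)%N by rewrite -ltnS -(ltr_nat R) -nat1r; clear -dM; lra.
have -> : (n - d)%N = m.+1 by rewrite /m; lia.
have -> : n%:R = m%:R + d%:R + 1 :> R by rewrite mR; ring.
have mn : (m <= n)%N by rewrite leq_subr.
have hS1 := int_binomE x mn; have hS2 := int_binomE x (leq_trans (leq_pred m) mn).
have [m_lt2|m_ge2] := ltnP m 2.
  have [m1 d1] : m = 1%N /\ d = 1%N by lia.
  rewrite m1 d1 /= mul1r in hS1 *; rewrite hS1 expr1.
  have : 0 < x ^+ 2 by apply: exprn_gt0.
  by rewrite expr2; nra.
have m_gt0 : (0 < m)%N by lia.
have mm_ge2 : 2 <= m%:R :> R by rewrite (ler_nat R 2 m).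
have -> : (1 + x) ^+ m.+1 = (1 + x) ^+ 2 * (1 + x) ^+ m.-1.
  by rewrite -exprD add2n prednK.
have em : (1 + x) ^+ m = (1 + x) * (1 + x) ^+ m.-1 by rewrite -exprS prednK.
rewrite em in hS1.
have mm1 : m.-1%:R = m%:R - 1 :> R by rewrite -subn1 natrB.
rewrite mm1 in hS2.
apply: (gap_split x_gt0 mm_ge2 _ hS1 hS2).
- by apply: exprn_ege1; lra.
- exact: gap_coef_ge0.
- apply: (gap_const_gt0 x_gt0) => //; first by apply: bernoulli_ineq; lra.
  + by move=> m2; apply: hQ2; rewrite m2.
  + by move=> m3; apply: hQ3; rewrite m3.
Qed.

End IndepPoly.

Theorem mainTheorem5 (R : realType) (n delta : nat) (e : rel 'I_n)
  (esym : symmetric e) (eirr : irreflexive e)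
  (hdelta : (0 < delta)%N)
  (hmindeg : forall v : 'I_n, (delta <= deg e v)%N)
  (x : R) (hx : 0 < x)
  (hn : (Cx x - 1) * delta%:R ^+ 2
        + ((1 - Dx x) * Cx x + 1 + Dx x) * delta%:R - Dx x <= n%:R) :
  graph_iso e (@Kbip n delta) \/ indep_poly e x < indep_poly (@Kbip n delta) x.
Proof.
have [lt2dn gap] := threshold_gap hx hdelta hn.
have [/existsP[v /andP[/eqP cW iW]]|/existsPn noW] :=
  boolP [exists v, (#|nonnbrs e v| == (n - delta.+1)%N) && is_indep e (nonnbrs e v)].
  have [iso|[le_count lt_count]] := iso_Kbip_or_indep_count_lt esym eirr hmindeg cW iW.
    by left.
  by right; apply: indep_poly_lt => //; lia.
right; apply: le_lt_trans (indep_poly_le_nonnbrs hx eirr hmindeg noW) _.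
by apply: lt_le_trans gap (indep_poly_Kbip_ge hx _); lia.
Qed.
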